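(* Let $p,q\ge2$ be coprime integers, $c=c_{p,q}$, $t=-q/p$, and let $0<k,r<p$, $0<l,s<q$ be integers and $h\in\mathbb C$. Let $\sigma=\sum_{j_1\ge\dots\ge j_u\ge1,\ j_1+\dots+j_u=rs}\rho_{j_1,\dots,j_u}L_{-j_1}\cdots L_{-j_u}\in U(\mathfrak{vir})$ (with $\rho_{j_1,\dots,j_u}\in\mathbb C$) be such that $\sigma v$ is a nonzero singular vector of the Verma module $M^c_{h_{r,s}}$, $v$ its highest weight vector. Define $\rho(\lambda,\mu)\in\mathbb C$ by $\sigma f_0=\rho(\lambda,\mu)f_{rs}$ in the Witt-algebra module $\mathcal F_{\lambda,\mu}$, where each $L_{-j}$ acts as $l_{-j}$. If there exists a nonzero intertwining operator of type $\binom{L^c_h}{L^c_{h_{k,l}}\ L^c_{h_{r,s}}}$, then $$\rho\big(-h_{k,l},\ h_{r,s}-h-h_{k,l}\big)=0.$$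
   Context: The Virasoro algebra $\mathfrak{vir}=\bigoplus_{n\in\mathbb Z}\mathbb CL_n\oplus\mathbb CC$ has brackets $[L_n,L_m]=(n-m)L_{n+m}+\frac{n^3-n}{12}\delta_{n,-m}C$, $C$ central. $\mathrm{Vir}^c$ is the universal Virasoro vertex algebra of central charge $c$ (vacuum $\mathbf1$, $T=L_{-1}$, conformal vector $L_{-2}\mathbf1$ with field $\sum_nL_nz^{-n-2}$). The Verma module $M^c_h=U(\mathfrak{vir})\otimes_{U(\bigoplus_{n\ge0}\mathbb CL_n\oplus\mathbb CC)}\mathbb Cm$ ($Cm=cm$, $L_0m=hm$, $L_nm=0$, $n\ge1$); a singular vector is a vector $w$ with $L_nw=0$ for all $n>0$ and $L_0w\in\mathbb Cw$. $L^c_h$ is the unique irreducible quotient of $M^c_h$, a $\mathrm{Vir}^c$-module with $T=L_{-1}$. $c_{p,q}=1-\frac{6(p-q)^2}{pq}$, $h_{k,l}=\frac{(lp-kq)^2-(p-q)^2}{4pq}$. The Witt algebra is $\bigoplus_{n\in\mathbb Z}\mathbb Cl_n$ with $[l_n,l_m]=(n-m)l_{n+m}$; for $\lambda,\mu\in\mathbb C$, $\mathcal F_{\lambda,\mu}$ is the Witt module with basis $f_j$ ($j\in\mathbb Z$) and $l_{-i}f_j=(\mu+j-\lambda(i+1))f_{j+i}$. An intertwining operator of type $\binom{M_3}{M_1\ M_2}$ between $\mathrm{Vir}^c$-modules is a linear map $a\mapsto\mathcal Y(a,z)=\sum_{n\in\mathbb C}a_{(n)}z^{-n-1}$ from $M_1$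 to $\mathrm{Hom}(M_2,M_3[[z]]z^{-S})$ (for some $S\subset\mathbb C$ with $S+\mathbb Z=S$, $S/\mathbb Z$ finite; formal sums $\sum_nf_nz^n$ with $n$ in a finite union of sets $-d+\mathbb Z_{\ge0}$, $d\in S$) such that $T\mathcal Y(a,z)-\mathcal Y(a,z)T=\mathcal Y(Ta,z)=\partial_z\mathcal Y(a,z)$ and for all $v\in\mathrm{Vir}^c$, $a\in M_1$, $b\in M_2$, $n,m\in\mathbb Z$, $k'\in\mathbb C$: $\sum_{j\ge0}(-1)^j\binom nj\big(v_{(m+n-j)}a_{(k'+j)}b-(-1)^na_{(n+k'-j)}v_{(m+j)}b\big)=\sum_{j\ge0}\binom mj(v_{(n+j)}a)_{(m+k'-j)}b$. *)

From mathcomp Require Import all_boot all_order all_algebra.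
From mathcomp.real_closed Require Import complex.
From mathcomp Require Import Rstruct.
From Stdlib Require Import Reals.

Set Implicit Arguments.
Unset Strict Implicit.
Unset Printing Implicit Defensive.
Import Order.TTheory GRing.Theory Num.Theory.
Local Open Scope ring_scope.

Definition C : numClosedFieldType := (Rdefinitions.R)[i].

Definition cpq (p q : nat) : C :=
  1 - 6%:R * (p%:R - q%:R) ^+ 2 / (p%:R * q%:R).
Definition hkl (p q k l : nat) : C :=
  (((l * p)%:R - (k * q)%:R) ^+ 2 - (p%:R - q%:R) ^+ 2) / (4%:R * p%:R * q%:R).

Definition binZ (p : int) (j : nat) : C :=
  (\prod_(i < j) (p%:~R - i%:R)) / (j`!)%:R.

Definition sgnZ (n : int) : C := (-1) ^+ absz n.

(* L n is the action of L_n, C acts as the scalar c.                  *)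
Definition vir_rep (c : C) (V : lmodType C) (L : int -> V -> V) : Prop :=
  (forall n (a : C) (x y : V), L n (a *: x + y) = a *: L n x + L n y) /\
  (forall (n m : int) (x : V),
     L n (L m x) - L m (L n x) =
       (n - m)%:~R *: L (n + m) x +
       (if n + m == 0 then ((n ^+ 3 - n)%:~R / 12%:R * c) *: x else 0)).

Definition vir_closed (V : lmodType C) (L : int -> V -> V) (S : V -> Prop) : Prop :=
  [/\ S 0, (forall x y, S x -> S y -> S (x + y)),
      (forall a x, S x -> S (a *: x)) & (forall n x, S x -> S (L n x))].

Definition vir_generated (V : lmodType C) (L : int -> V -> V) (w : V) : Prop :=
  forall S : V -> Prop, vir_closed L S -> S w -> forall x, S x.

Definition vir_irreducible (V : lmodType C) (L : int -> V -> V) : Prop :=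
  forall S : V -> Prop, vir_closed L S -> (exists x, S x /\ x <> 0) -> forall x, S x.

Definition hw_vector (V : lmodType C) (L : int -> V -> V) (h : C) (w : V) : Prop :=
  L 0 w = h *: w /\ (forall n : int, 0 < n -> L n w = 0).

Definition singular (V : lmodType C) (L : int -> V -> V) (x : V) : Prop :=
  (forall n : int, 0 < n -> L n x = 0) /\ exists e : C, L 0 x = e *: x.

Definition is_partition (J : seq nat) : bool :=
  sorted (fun a b : nat => leq b a) J && all (fun j : nat => leq 1 j) J.
Definition is_partition_of (J : seq nat) (n : nat) : bool :=
  is_partition J && (sumn J == n).

Definition mono_act (V : lmodType C) (L : int -> V -> V) (J : seq nat) (x : V) : V :=
  foldr (fun j y => L (- (j%:Z)) y) x J.

(* an element sigma = sum rho_J L_{-J} of U(vir), given as a list of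
   (coefficient, monomial) pairs, acting on x *)
Definition sigma_act (V : lmodType C) (L : int -> V -> V)
    (sigma : seq (C * seq nat)) (x : V) : V :=
  \sum_(t <- sigma) t.1 *: mono_act L t.2 x.

(* The Verma module M^c_h: a representation generated by a highest weight
   vector v of weight h on which the PBW monomials L_{-J} v (J a partition)
   are linearly independent. *)
Definition verma (c h : C) (V : lmodType C) (L : int -> V -> V) (v : V) : Prop :=
  [/\ vir_rep c L, hw_vector L h v, vir_generated L v &
      forall s : seq (C * seq nat),
        uniq (map snd s) -> all (fun t => is_partition t.2) s ->
        \sum_(t <- s) t.1 *: mono_act L t.2 v = 0 ->
        all (fun t => t.1 == 0) s].

Definition verma_singular (c h : C) (sigma : seq (C * seq nat)) : Prop :=
  exists (V : lmodType C) (L : int -> V -> V) (v : V),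
    [/\ verma c h L v, sigma_act L sigma v <> 0 & singular L (sigma_act L sigma v)].

Definition irr_hw (c h : C) (V : lmodType C) (L : int -> V -> V) (w : V) : Prop :=
  [/\ vir_rep c L, w <> 0, hw_vector L h w, vir_generated L w & vir_irreducible L].

Definition fin_sum (V : lmodType C) (t : nat -> V) (x : V) : Prop :=
  exists N : nat, (forall j, leq N j -> t j = 0) /\ x = \sum_(j < N) t j.

(* Vir^c-module structure on a Vir-module W: Y u q is the mode u_(q) of the
   element u = L_{-n1} ... L_{-nk} 1 of Vir^c (u = [:: n1; ...; nk]).
   It is (uniquely) determined by 1_(q) = delta_{q,-1} and the iterate
   formula for (omega_(1-n) u)_(q), with omega_(k) = L_{k-1}:
   (L_{-n} u)_(q) w = sum_j (-1)^j binom(1-n,j)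
        ( L_{-n-j} u_(q+j) w - (-1)^(1-n) u_(1-n+q-j) L_{j-1} w ). *)
Definition vir_modes (W : lmodType C) (L : int -> W -> W)
    (Y : seq nat -> int -> W -> W) : Prop :=
  (forall q w, Y [::] q w = if q == -1 then w else 0) /\
  (forall (n : nat) (u : seq nat) (q : int) (w : W),
     fin_sum (fun j : nat =>
        ((-1) ^+ j * binZ (1 - n%:Z) j) *:
          (L (- (n%:Z) - j%:Z) (Y u (q + j%:Z) w)
           - sgnZ (1 - n%:Z) *: Y u (1 - n%:Z + q - j%:Z) (L (j%:Z - 1) w)))
       (Y (n :: u) q w)).

Definition virc_basis (u : seq nat) : bool :=
  sorted (fun a b : nat => leq b a) u && all (fun j : nat => leq 2 j) u.

(* Intertwining operator of type (M3 ; M1 M2); I a x b = a_(x) b, x in C. *)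
Definition intertwining
    (M1 M2 M3 : lmodType C)
    (L1 : int -> M1 -> M1) (L2 : int -> M2 -> M2) (L3 : int -> M3 -> M3)
    (Y1 : seq nat -> int -> M1 -> M1) (Y2 : seq nat -> int -> M2 -> M2)
    (Y3 : seq nat -> int -> M3 -> M3)
    (I : M1 -> C -> M2 -> M3) : Prop :=
  (forall (al : C) a a' x b, I (al *: a + a') x b = al *: I a x b + I a' x b) /\
  (forall (al : C) a x b b', I a x (al *: b + b') = al *: I a x b + I a x b') /\
  (* values in M3[[z]] z^{-S} *)
  (exists S : C -> Prop,
     (forall x (k : int), S x -> S (x + k%:~R)) /\
     (exists s0 : seq C, forall x, S x -> exists2 e, e \in s0 & exists k : int, x = e + k%:~R) /\
     (forall a b, exists D : seq C, (forall d, d \in D -> S d) /\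
        forall x, I a x b <> 0 ->
          exists2 d, d \in D & exists k : nat, - x - 1 = - d + k%:R)) /\
  (* T Y(a,z) - Y(a,z) T = Y(Ta,z) = d/dz Y(a,z), T = L_{-1} *)
  (forall a x b, L3 (-1) (I a x b) - I a x (L2 (-1) b) = I (L1 (-1) a) x b) /\
  (forall a x b, I (L1 (-1) a) x b = - x *: I a (x - 1) b) /\
  (forall (v : seq nat) a b (n m : int) (k' : C), virc_basis v ->
     exists X : M3,
       fin_sum (fun j : nat =>
          ((-1) ^+ j * binZ n j) *:
            (Y3 v (m + n - j%:Z) (I a (k' + j%:R) b)
             - sgnZ n *: I a (n%:~R + k' - j%:R) (Y2 v (m + j%:Z) b))) X /\
       fin_sum (fun j : nat =>
          binZ m j *: I (Y1 v (n + j%:Z) a) (m%:~R + k' - j%:R) b) X).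

Definition nonzero_intertwining_exists (c h1 h2 h3 : C) : Prop :=
  exists (M1 M2 M3 : lmodType C)
    (L1 : int -> M1 -> M1) (L2 : int -> M2 -> M2) (L3 : int -> M3 -> M3)
    (w1 : M1) (w2 : M2) (w3 : M3)
    (Y1 : seq nat -> int -> M1 -> M1) (Y2 : seq nat -> int -> M2 -> M2)
    (Y3 : seq nat -> int -> M3 -> M3) (I : M1 -> C -> M2 -> M3),
    [/\ irr_hw c h1 L1 w1, irr_hw c h2 L2 w2 & irr_hw c h3 L3 w3] /\
    [/\ vir_modes L1 Y1, vir_modes L2 Y2 & vir_modes L3 Y3] /\
    intertwining L1 L2 L3 Y1 Y2 Y3 I /\
    exists a x b, I a x b <> 0.

(* Witt module F_{lam,mu}: a vector coef * f_j is the pair (coef, j);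
   l_{-i} f_j = (mu + j - lam (i+1)) f_{j+i}. *)
Definition witt_step (lam mu : C) (i : nat) (x : C * int) : C * int :=
  (x.1 * (mu + x.2%:~R - lam * (i.+1)%:R), x.2 + i%:Z).

Definition witt_mono (lam mu : C) (J : seq nat) : C * int :=
  foldr (witt_step lam mu) (1, 0) J.

(* rho(lam, mu): sigma f_0 = rho(lam,mu) f_{rs} (all monomials of sigma
   have degree rs, so each witt_mono lands in f_{rs}). *)
Definition witt_rho (sigma : seq (C * seq nat)) (lam mu : C) : C :=
  \sum_(t <- sigma) t.1 * (witt_mono lam mu t.2).1.

From mathcomp Require Import all_boot all_order all_algebra.
From mathcomp Require Import zify ring.
Set Implicit Arguments.
Unset Strict Implicit.
Unset Printing Implicit Defensive.
Import GRing.Theory Num.Theory.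
Local Open Scope ring_scope.

(* The Jacobi identity for the conformal vector gives, for the highest weight
   vector w1 of weight h1, the commutation rule
     [L_m, I(w1, x)] = ((m + 1) h1 - (m + 1) - x) I(w1, x + m).
   Modulo the positive-degree part P of L_{h3}, it makes
   L_{-J} w2 |-> I(w1, x + |J|) (L_{-J} w2) a copy of the Witt module
   F_{-h1, x + 1 - 2 h1} with w2 in the role of f_0, so that
   I(w1, x + rs) (sigma w2) = rho I(w1, x) w2 mod P.  The singular vector
   sigma v vanishes in the irreducible quotient L_{h_{r,s}}, hence
   rho I(w1, x) w2 lies in P.  Comparing L_0-weights, I(w1, x) w2 lies in P
   unless x = h1 + h2 - h3 - 1; if it lay in P for every x, the submodule
   spanned by all I(w1, x) b would lie in P, so I would vanish on w1 and
   therefore everywhere. *)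

Section LinearMap.
Variables (U V : lmodType C) (f : U -> V).
Hypothesis flin : linear f.

Lemma lin0 : f 0 = 0.
Proof.
have := flin 1 0 0; rewrite !scale1r !addr0 => e.
by have := subrr (f 0); rewrite {1}e addrK.
Qed.

Lemma linD x y : f (x + y) = f x + f y.
Proof. by rewrite -[x]scale1r flin !scale1r. Qed.

Lemma linZ a x : f (a *: x) = a *: f x.
Proof. by rewrite -[a *: x]addr0 flin lin0 addr0. Qed.

Lemma linB x y : f (x - y) = f x - f y.
Proof. by rewrite -scaleN1r linD linZ scaleN1r. Qed.

Lemma lin_sum (I : Type) (r : seq I) (P : pred I) (F : I -> U) :
  f (\sum_(i <- r | P i) F i) = \sum_(i <- r | P i) f (F i).
Proof. exact: (big_morph f linD lin0). Qed.

End LinearMap.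

Lemma eigen_sum_eq0 (V : lmodType C) (f : V -> V) (X : Type) (l : seq X)
    (P : pred X) (F : X -> V) (mu : X -> C) (lam : C) (g : V) :
  linear f -> f g = lam *: g ->
  (forall t, P t -> f (F t) = mu t *: F t) -> (forall t, P t -> mu t != lam) ->
  g = \sum_(t <- l | P t) F t -> g = 0.
Proof.
move=> flin; elim: l F g => [|x l IH] F g fg fF mu_lam; first by rewrite big_nil.
rewrite big_cons; case: ifP => [Px eg|_]; last exact: IH.
(* Applying [f - mu x] kills the first summand and rescales the others. *)
have key : (lam - mu x) *: g = \sum_(t <- l | P t) (mu t - mu x) *: F t.
  rewrite scalerBl -fg eg linD // lin_sum // fF // scalerDr.
  rewrite (eq_bigr (fun t => mu t *: F t)); last by move=> t /fF.
  rewrite scaler_sumr opprD addrACA subrr add0r -sumrB.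
  by apply: eq_bigr => t _; rewrite scalerBl.
have /eqP : (lam - mu x) *: g = 0.
  apply: (IH _ _ _ _ mu_lam key) => [|t Pt]; rewrite linZ //.
    by rewrite fg !scalerA mulrC.
  by rewrite fF // !scalerA mulrC.
by rewrite scaler_eq0 subr_eq0 eq_sym (negbTE (mu_lam x Px)) => /eqP.
Qed.

Definition expr_Lneg (j : nat) (s : seq (C * seq nat)) : seq (C * seq nat) :=
  [seq (t.1, j :: t.2) | t <- s].

Definition expr_scale (a : C) (s : seq (C * seq nat)) : seq (C * seq nat) :=
  [seq (a * t.1, t.2) | t <- s].

Definition vir_central (c : C) (n : nat) : C := (n%:Z ^+ 3 - n%:Z)%:~R / 12%:R * c.

(* Normal ordering of L_n L_{-J} w for w highest weight of weight h: L_n is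
   commuted through L_{-J}; a part j of J equal to 0 stands for L_0. *)
Fixpoint mono_Lpos (c h : C) (J : seq nat) (n : nat) : seq (C * seq nat) :=
  match J with
  | [::] => if n == 0%N then [:: (h, [::])] else [::]
  | j :: J' => expr_Lneg j (mono_Lpos c h J' n) ++
      expr_scale (n + j)%:R
        (if (j <= n)%N then mono_Lpos c h J' (n - j) else [:: (1, (j - n)%N :: J')]) ++
      (if n == j then [:: (vir_central c n, J')] else [::])
  end.

Definition expr_Lpos (c h : C) (n : nat) (s : seq (C * seq nat)) : seq (C * seq nat) :=
  [seq (t.1 * u.1, u.2) | t <- s, u <- mono_Lpos c h t.2 n].

Definition deg0_coef (h : C) (s : seq (C * seq nat)) : C :=
  \sum_(t <- s | sumn t.2 == 0%N) t.1 * h ^+ size t.2.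

Definition hw_span (V : lmodType C) (L : int -> V -> V) (w y : V) : Prop :=
  exists s, y = sigma_act L s w.

Definition pos_span (V : lmodType C) (L : int -> V -> V) (w y : V) : Prop :=
  exists2 s, all (fun t => 0 < sumn t.2)%N s & y = sigma_act L s w.

Section SigmaAct.
Variables (V : lmodType C) (L : int -> V -> V).

Lemma sigma_act_nil w : sigma_act L [::] w = 0.
Proof. by rewrite /sigma_act big_nil. Qed.

Lemma sigma_act_cons t s w :
  sigma_act L (t :: s) w = t.1 *: mono_act L t.2 w + sigma_act L s w.
Proof. by rewrite /sigma_act big_cons. Qed.

Lemma sigma_act_cat s1 s2 w :
  sigma_act L (s1 ++ s2) w = sigma_act L s1 w + sigma_act L s2 w.
Proof. by rewrite /sigma_act big_cat. Qed.

Lemma sigma_act1 a J w : sigma_act L [:: (a, J)] w = a *: mono_act L J w.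
Proof. by rewrite sigma_act_cons sigma_act_nil addr0. Qed.

Lemma sigma_act_scale a s w : sigma_act L (expr_scale a s) w = a *: sigma_act L s w.
Proof.
rewrite /sigma_act big_map scaler_sumr; apply: eq_bigr => t _.
by rewrite scalerA.
Qed.

Lemma pos_span0 w : pos_span L w 0.
Proof. by exists [::]; rewrite ?sigma_act_nil. Qed.

Lemma pos_spanD w x y : pos_span L w x -> pos_span L w y -> pos_span L w (x + y).
Proof.
move=> [s1 a1 ->] [s2 a2 ->]; exists (s1 ++ s2); last by rewrite sigma_act_cat.
by rewrite all_cat a1 a2.
Qed.

Lemma pos_spanZ w a x : pos_span L w x -> pos_span L w (a *: x).
Proof.
move=> [s a1 ->]; exists (expr_scale a s); last by rewrite sigma_act_scale.
by rewrite all_map.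
Qed.

Lemma pos_spanB w x y : pos_span L w x -> pos_span L w y -> pos_span L w (x - y).
Proof. by move=> Px Py; rewrite -scaleN1r; apply/pos_spanD/pos_spanZ. Qed.

End SigmaAct.

Section VirRep.
Variables (c : C) (V : lmodType C) (L : int -> V -> V).
Hypothesis rep : vir_rep c L.

Lemma vir_linear n : linear (L n).
Proof. by case: rep => lin _ a x y; apply: lin. Qed.

Lemma vir_comm n m x : L n (L m x) = L m (L n x) +
  ((n - m)%:~R *: L (n + m) x +
   (if n + m == 0 then ((n ^+ 3 - n)%:~R / 12%:R * c) *: x else 0)).
Proof. by case: rep => _ H; rewrite -H addrC subrK. Qed.

Lemma sigma_act_Lneg j s w :
  sigma_act L (expr_Lneg j s) w = L (- j%:Z) (sigma_act L s w).
Proof.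
rewrite /sigma_act big_map (lin_sum (vir_linear _)); apply: eq_bigr => t _.
by rewrite (linZ (vir_linear _)).
Qed.

Lemma pos_span_Lneg w j x : pos_span L w x -> pos_span L w (L (- j%:Z) x).
Proof.
move=> [s a1 ->]; exists (expr_Lneg j s); last by rewrite sigma_act_Lneg.
by rewrite all_map; apply: sub_all a1 => t /=; lia.
Qed.

Lemma pos_span_sigma_act w u s : pos_span L w u -> pos_span L w (sigma_act L s u).
Proof.
move=> Pu; elim: s => [|t s IH]; first by rewrite sigma_act_nil; apply: pos_span0.
rewrite sigma_act_cons; apply: pos_spanD => //; apply: pos_spanZ.
by elim: t.2 => [|j J IHJ] //=; apply: pos_span_Lneg.
Qed.

Section HighestWeight.
Variables (h : C) (w : V).
Hypothesis hw : hw_vector L h w.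

Lemma mono_act_weight J :
  L 0 (mono_act L J w) = (h + (sumn J)%:R) *: mono_act L J w.
Proof.
case: hw => Hw _; elim: J => [|j J IH] /=; first by rewrite addr0.
rewrite vir_comm IH (linZ (vir_linear _)) add0r expr0n subr0 mul0r mul0r scale0r.
rewrite if_same addr0 sub0r opprK -pmulrn natrD -scalerDl; congr (_ *: _); ring.
Qed.

Lemma mono_act_deg0 J : sumn J = 0%N -> mono_act L J w = h ^+ size J *: w.
Proof.
case: hw => Hw _; elim: J => [|j J IH] /=; first by rewrite scale1r.
move=> e; have -> : j = 0%N by lia.
rewrite IH; last by lia.
by rewrite oppr0 (linZ (vir_linear _)) Hw scalerA -exprSr.
Qed.

Lemma sigma_act_mono_Lpos J n :
  sigma_act L (mono_Lpos c h J n) w = L n%:Z (mono_act L J w).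
Proof.
case: hw => Hw0 Hwp; elim: J n => [|j J IH] n /=.
  case: eqP => [->|nn]; first by rewrite sigma_act1 /= Hw0.
  by rewrite sigma_act_nil Hwp // ltz_nat; lia.
rewrite !sigma_act_cat sigma_act_Lneg IH sigma_act_scale [RHS]vir_comm.
congr (_ + _); congr (_ + _).
  rewrite opprK -pmulrn natrD; congr (_ *: _).
  case: leqP => jn; first by rewrite IH subzn.
  by rewrite sigma_act1 scale1r /=; congr (L _ _); lia.
rewrite subr_eq0 eqz_nat; case: eqP => [->|_]; last by rewrite sigma_act_nil.
by rewrite sigma_act1.
Qed.

Lemma sigma_act_Lpos n s : sigma_act L (expr_Lpos c h n s) w = L n%:Z (sigma_act L s w).
Proof.
rewrite {1}/sigma_act big_allpairs_dep /= (lin_sum (vir_linear _)).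
apply: eq_bigr => t _; rewrite (linZ (vir_linear _)) -sigma_act_mono_Lpos.
by rewrite /sigma_act scaler_sumr; apply: eq_bigr => u _; rewrite scalerA.
Qed.

Lemma hw_span_closed : vir_closed L (hw_span L w).
Proof.
split.
- by exists [::]; rewrite sigma_act_nil.
- by move=> x y [s1 ->] [s2 ->]; exists (s1 ++ s2); rewrite sigma_act_cat.
- by move=> a x [s ->]; exists (expr_scale a s); rewrite sigma_act_scale.
- move=> [] k x [s ->].
    by exists (expr_Lpos c h k s); rewrite sigma_act_Lpos.
  by exists (expr_Lneg k.+1 s); rewrite sigma_act_Lneg NegzE.
Qed.

Lemma pos_span_sigma_act_deg0 s :
  pos_span L w (sigma_act L s w - deg0_coef h s *: w).
Proof.
exists (filter (fun t => 0 < sumn t.2)%N s); first exact: filter_all.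
rewrite /sigma_act (bigID (fun t => 0 < sumn t.2)%N) /= big_filter.
suff -> : \sum_(t <- s | ~~ (0 < sumn t.2)%N) t.1 *: mono_act L t.2 w =
          deg0_coef h s *: w by rewrite addrK.
rewrite /deg0_coef scaler_suml; apply: eq_big => [t|t]; first by rewrite lt0n negbK.
by rewrite -leqNgt leqn0 => /eqP e; rewrite mono_act_deg0 // scalerA.
Qed.

Lemma pos_span_hw_eq0 d : pos_span L w (d *: w) -> d *: w = 0.
Proof.
case: hw => H0 _ [s a1 e].
apply: (@eigen_sum_eq0 _ (L 0) _ s (fun t => 0 < sumn t.2)%N
          (fun t => t.1 *: mono_act L t.2 w) (fun t => h + (sumn t.2)%:R) h).
- exact: vir_linear.
- by rewrite (linZ (vir_linear _)) H0 !scalerA mulrC.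
- by move=> t _; rewrite (linZ (vir_linear _)) mono_act_weight !scalerA mulrC.
- by move=> t t0; rewrite -subr_eq0 addrAC subrr add0r pnatr_eq0 -lt0n.
- by rewrite e -big_filter (all_filterP a1).
Qed.

Hypothesis gen : vir_generated L w.

Lemma hw_span_all y : hw_span L w y.
Proof.
apply: (gen hw_span_closed).
by exists [:: (1, [::])]; rewrite sigma_act1 scale1r.
Qed.

Lemma pos_span_Lneg_gen j y : (0 < j)%N -> pos_span L w (L (- j%:Z) y).
Proof.
move=> j0; have [s ->] := hw_span_all y.
exists (expr_Lneg j s); last by rewrite sigma_act_Lneg.
by rewrite all_map; apply/allP => t _ /=; lia.
Qed.

Lemma pos_span_off_weight mu y : L 0 y = mu *: y -> mu != h -> pos_span L w y.
Proof.
move=> Ly mu_h; have [s ey] := hw_span_all y.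
set p := y - deg0_coef h s *: w.
have Pp : pos_span L w p by rewrite /p {1}ey; apply: pos_span_sigma_act_deg0.
(* [L_0 - h] kills the weight-h component of y and preserves [pos_span L w]. *)
have : pos_span L w ((mu - h) *: y).
  have -> : (mu - h) *: y = L 0 p - h *: p.
    case: hw => H0 _.
    rewrite (linB (vir_linear _)) (linZ (vir_linear _)) Ly H0 scalerBl scalerBr.
    by rewrite !scalerA [h * _]mulrC opprB addrA subrK.
  by apply: pos_spanB; [exact: (pos_span_Lneg 0 Pp) | exact: pos_spanZ].
move=> /(pos_spanZ (mu - h)^-1); rewrite scalerA mulVf ?scale1r //.
by rewrite subr_eq0.
Qed.

End HighestWeight.

Lemma pos_singular_irr_eq0 h w h' u :
  vir_irreducible L -> w <> 0 -> hw_vector L h w -> hw_vector L h' u ->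
  pos_span L w u -> u = 0.
Proof.
move=> irr w0 hw hwu Pu; case: (eqVneq u 0) => // /eqP u0; exfalso; apply: w0.
have [s ew] : hw_span L u w.
  apply: (irr _ (hw_span_closed hwu)); exists u; split => //.
  by exists [:: (1, [::])]; rewrite sigma_act1 scale1r.
rewrite -[w]scale1r; apply: (pos_span_hw_eq0 hw).
rewrite scale1r [X in pos_span _ _ X]ew.
exact: pos_span_sigma_act.
Qed.

End VirRep.

Lemma irr_hw_sigma_act_eq0 c h (V W : lmodType C) (LV : int -> V -> V)
    (LW : int -> W -> W) v w :
  vir_rep c LV -> vir_rep c LW -> hw_vector LV h v -> hw_vector LW h w ->
  v <> 0 -> w <> 0 -> vir_irreducible LW ->
  forall s, sigma_act LV s v = 0 -> sigma_act LW s w = 0.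
Proof.
move=> rV rW hv hw v0 w0 irr s0 e0.
case: (eqVneq (sigma_act LW s0 w) 0) => // /eqP ne.
(* The image in W of the annihilator of v is a submodule; were it nonzero it
   would contain w, and the weight-h coefficient of s would be 0 and 1 at once. *)
pose K y := exists2 s, sigma_act LV s v = 0 & y = sigma_act LW s w.
have Kc : vir_closed LW K.
  split.
  - by exists [::]; rewrite sigma_act_nil.
  - move=> x y [s1 e1 ->] [s2 e2 ->]; exists (s1 ++ s2); rewrite !sigma_act_cat //.
    by rewrite e1 e2 addr0.
  - by move=> a x [s e ->]; exists (expr_scale a s); rewrite !sigma_act_scale ?e ?scaler0.
  - move=> [] k x [s e ->].
      exists (expr_Lpos c h k s); rewrite ?(sigma_act_Lpos rV hv) ?(sigma_act_Lpos rW hw) //.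
      by rewrite e (lin0 (vir_linear rV _)).
    exists (expr_Lneg k.+1 s); rewrite ?(sigma_act_Lneg rV) ?(sigma_act_Lneg rW) ?NegzE //.
    by rewrite e (lin0 (vir_linear rV _)).
have [s ev ew] : K w by apply: (irr K Kc); exists (sigma_act LW s0 w); split => //; exists s0.
have d0 : deg0_coef h s = 0.
  have := pos_span_sigma_act_deg0 rV hv s.
  rewrite ev sub0r -scaleNr => /(pos_span_hw_eq0 rV hv) /eqP.
  by rewrite scaler_eq0 oppr_eq0 => /orP[/eqP // | /eqP].
have := pos_span_sigma_act_deg0 rW hw s.
rewrite -ew d0 scale0r subr0 -[X in pos_span _ _ X]scale1r.
by move/(pos_span_hw_eq0 rW hw); rewrite scale1r.
Qed.

Lemma verma_singular_irr_eq0 c h sigma n (W : lmodType C) (L : int -> W -> W) w :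
  verma_singular c h sigma -> all (fun t => is_partition_of t.2 n) sigma ->
  (0 < n)%N -> irr_hw c h L w -> sigma_act L sigma w = 0.
Proof.
move=> [V [LV [v [[rV hv _ indep] _ [sing _]]]]] hom n0 [rW w0 hw _ irr].
have v0 : v <> 0.
  move=> v0; have := indep [:: (1, [::])] isT isT.
  by rewrite big_seq1 scale1r v0 => /(_ erefl); rewrite /= oner_eq0.
set u := sigma_act L sigma w.
have hwu : hw_vector L (h + n%:R) u.
  split.
    rewrite /u /sigma_act (lin_sum (vir_linear rW _)) scaler_sumr.
    apply: eq_big_seq => t /(allP hom) /andP[_ /eqP <-].
    by rewrite (linZ (vir_linear rW _)) (mono_act_weight rW hw) !scalerA mulrC.
  case=> [k k0 | //]; rewrite /u -(sigma_act_Lpos rW hw).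
  apply: (irr_hw_sigma_act_eq0 rV rW hv hw v0 w0 irr).
  by rewrite (sigma_act_Lpos rV hv); apply: sing.
apply: (pos_singular_irr_eq0 rW irr w0 hw hwu); exists sigma => //.
by apply: sub_all hom => t /andP[_ /eqP ->].
Qed.

Section FinSum.
Variable V : lmodType C.

Lemma fin_sum_le (t : nat -> V) X K :
  fin_sum t X -> (forall j, (K <= j)%N -> t j = 0) -> X = \sum_(j < K) t j.
Proof.
move=> [N [HN ->]] HK.
have trunc A M : (A <= M)%N -> (forall j, (A <= j)%N -> t j = 0) ->
    \sum_(j < M) t j = \sum_(j < A) t j.
  move=> AM tA; rewrite -!(big_mkord xpredT) (big_cat_nat _ AM) //=.
  rewrite [X in _ + X]big1_seq ?addr0 // => j /andP[_].
  by rewrite mem_index_iota => /andP[Aj _]; apply: tA.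
by rewrite -(trunc N (maxn N K)) ?leq_maxl // (trunc K) ?leq_maxr.
Qed.

Lemma fin_sum0 (t : nat -> V) X : fin_sum t X -> (forall j, t j = 0) -> X = 0.
Proof. by move=> H t0; rewrite (fin_sum_le (K:=0) H) ?big_ord0. Qed.

Lemma fin_sum1 (t : nat -> V) X j0 :
  fin_sum t X -> (forall j, j != j0 -> t j = 0) -> X = t j0.
Proof.
move=> H t0; rewrite (fin_sum_le (K:=j0.+1) H); last first.
  by move=> j jl; apply: t0; rewrite neq_ltn jl orbT.
rewrite big_ord_recr /= big1 ?add0r // => i _.
by apply: t0; rewrite neq_ltn ltn_ord.
Qed.

Lemma fin_sum2 (t : nat -> V) X :
  fin_sum t X -> (forall j, (2 <= j)%N -> t j = 0) -> X = t 0%N + t 1%N.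
Proof. by move=> H t0; rewrite (fin_sum_le H t0) big_ord_recr big_ord1. Qed.

End FinSum.

Lemma binZ0 p : binZ p 0 = 1.
Proof. by rewrite /binZ big_ord0 fact0 divr1. Qed.

Lemma binZ1 p : binZ p 1 = p%:~R.
Proof. by rewrite /binZ big_ord1 /= subr0 divr1. Qed.

Lemma binZ0S j : binZ 0 j.+1 = 0.
Proof. by rewrite /binZ big_ord_recl /= mulr0z subr0 !mul0r. Qed.

Lemma binZN1 j : binZ (-1) j = (-1) ^+ j.
Proof.
have prodN1 : \prod_(i < j) ((-1 : int)%:~R - i%:R) = (-1) ^+ j * (j`!)%:R :> C.
  elim: j => [|j IH]; first by rewrite big_ord0 expr0 mul1r.
  rewrite big_ord_recr IH /= factS natrM exprS mulrN1z -addn1 natrD.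
  by rewrite -opprD addrC mulrN mulN1r mulNr -mulrA (mulrC j`!%:R).
by rewrite /binZ prodN1 mulfK // pnatr_eq0 -lt0n fact_gt0.
Qed.

Lemma vir_modes_omega c (W : lmodType C) (L : int -> W -> W) Y :
  vir_rep c L -> vir_modes L Y -> forall q w, Y [:: 2%N] q w = L (q - 1) w.
Proof.
move=> rep [Y0 YS] q w; have := YS 2%N [::] q w.
have -> : 1 - 2%:Z = -1 by [].
have term j : ((-1) ^+ j * binZ (-1) j) *: (L (- 2%:Z - j%:Z) (Y [::] (q + j%:Z) w)
      - sgnZ (-1) *: Y [::] (-1 + q - j%:Z) (L (j%:Z - 1) w)) =
    (if q + j%:Z == -1 then L (- 2%:Z - j%:Z) w else 0) +
    (if q == j%:Z then L (j%:Z - 1) w else 0).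
  rewrite binZN1 -exprMn mulrNN mulr1 expr1n scale1r !Y0 /sgnZ expr1 scaleN1r.
  rewrite opprK; congr (_ + _).
    by case: ifP => // _; rewrite (lin0 (vir_linear rep _)).
  by have -> : (-1 + q - j%:Z == -1) = (q == j%:Z) by apply/eqP/eqP; lia.
move=> H; case: q H term => k H term;
  rewrite (fin_sum1 (j0:=k) H) => [|j /eqP jk]; rewrite term.
- have -> : (k%:Z + k%:Z == -1) = false by apply/negbTE/eqP; lia.
  by rewrite eqxx /= add0r.
- have -> : (k%:Z + j%:Z == -1) = false by apply/negbTE/eqP; lia.
  have -> : (k%:Z == j%:Z) = false by apply/negbTE/eqP; lia.
  by rewrite /= addr0.
- have -> : (Negz k + k%:Z == -1) by apply/eqP; lia.
  have -> : (Negz k == k%:Z) = false by [].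
  by rewrite /= addr0; congr (L _ _); lia.
- have -> : (Negz k + j%:Z == -1) = false by apply/negbTE/eqP; lia.
  have -> : (Negz k == j%:Z) = false by [].
  by rewrite /= addr0.
Qed.

Lemma witt_mono_snd lam mu J : (witt_mono lam mu J).2 = (sumn J)%:Z.
Proof. by elim: J => [|j J IH] //=; rewrite IH addrC. Qed.

Lemma witt_mono_cons lam mu j J :
  (witt_mono lam mu (j :: J)).1 =
    (witt_mono lam mu J).1 * (mu + (sumn J)%:R - lam * j.+1%:R).
Proof. by rewrite /= -/(witt_mono lam mu J) witt_mono_snd. Qed.

Section Intertwining.
Variables (c : C) (M1 M2 M3 : lmodType C)
  (L1 : int -> M1 -> M1) (L2 : int -> M2 -> M2) (L3 : int -> M3 -> M3)
  (Y1 : seq nat -> int -> M1 -> M1) (Y2 : seq nat -> int -> M2 -> M2)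
  (Y3 : seq nat -> int -> M3 -> M3) (I : M1 -> C -> M2 -> M3)
  (h1 h2 h3 : C) (w1 : M1) (w2 : M2) (w3 : M3).
Hypotheses (r1 : vir_rep c L1) (r2 : vir_rep c L2) (r3 : vir_rep c L3)
  (m1 : vir_modes L1 Y1) (m2 : vir_modes L2 Y2) (m3 : vir_modes L3 Y3)
  (hI : intertwining L1 L2 L3 Y1 Y2 Y3 I)
  (hw1 : hw_vector L1 h1 w1) (hw2 : hw_vector L2 h2 w2) (hw3 : hw_vector L3 h3 w3)
  (gen1 : vir_generated L1 w1) (gen2 : vir_generated L2 w2)
  (gen3 : vir_generated L3 w3) (irr3 : vir_irreducible L3) (w3_neq0 : w3 <> 0).

Lemma I_linear_l x b : linear (fun a => I a x b).
Proof. by case: hI => lin _ al u v; apply: lin. Qed.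

Lemma I_linear_r a x : linear (I a x).
Proof. by case: hI => _ [lin _] al u v; apply: lin. Qed.

Lemma I_Lm1 a x b : I (L1 (-1) a) x b = - x *: I a (x - 1) b.
Proof. by case: hI => _ [_ [_ [_ [H _]]]]; apply: H. Qed.

Lemma I_jacobi (v : seq nat) a b (n m : int) (k' : C) : virc_basis v ->
  exists X : M3,
    fin_sum (fun j : nat =>
       ((-1) ^+ j * binZ n j) *:
         (Y3 v (m + n - j%:Z) (I a (k' + j%:R) b)
          - sgnZ n *: I a (n%:~R + k' - j%:R) (Y2 v (m + j%:Z) b))) X /\
    fin_sum (fun j : nat =>
       binZ m j *: I (Y1 v (n + j%:Z) a) (m%:~R + k' - j%:R) b) X.
Proof. by case: hI => _ [_ [_ [_ [_ H]]]]; apply: H. Qed.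

(* The Jacobi identity for the conformal vector, with n = 0 and m = M + 1. *)
Lemma I_hw_comm (M : int) x b :
  L3 M (I w1 x b) - I w1 x (L2 M b) =
  ((M + 1)%:~R * h1 - ((M + 1)%:~R + x)) *: I w1 (x + M%:~R) b.
Proof.
have [X [H1 H2]] := I_jacobi w1 b 0 (M + 1) x (isT : virc_basis [:: 2%N]).
have -> : L3 M (I w1 x b) - I w1 x (L2 M b) = X.
  rewrite (fin_sum1 (j0:=0%N) H1); last first.
    by case=> [//|j] _; rewrite binZ0S mulr0 scale0r.
  rewrite binZ0 expr0 mul1r scale1r /sgnZ expr0 scale1r.
  rewrite (vir_modes_omega r3 m3) (vir_modes_omega r2 m2) mulr0z add0r !subr0 addr0.
  by congr (L3 _ _ - I _ _ (L2 _ _)); lia.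
rewrite (fin_sum2 H2); last first.
  case=> [//|[//|j]] _; rewrite (vir_modes_omega r1 m1).
  by case: hw1 => _ ->; rewrite ?(lin0 (I_linear_l _ _)) ?scaler0 //; lia.
case: hw1 => H0 _; rewrite !(vir_modes_omega r1 m1) binZ0 binZ1 /= H0 I_Lm1.
rewrite (linZ (I_linear_l _ _)) !scalerA mul1r subr0 intrD.
have -> : M%:~R + 1 + x - 1 = x + M%:~R by ring.
by rewrite -scalerDl; congr (_ *: _); ring.
Qed.

Lemma I_w1_Lneg j x b :
  I w1 x (L2 (- j%:Z) b) =
  L3 (- j%:Z) (I w1 x b) + (x + 1 - j%:R + (j%:R - 1) * h1) *: I w1 (x - j%:R) b.
Proof.
have := I_hw_comm (- j%:Z) x b; rewrite intrN -pmulrn => e.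
rewrite -[I w1 x _]opprK -[- I w1 x _](addKr (L3 (- j%:Z) (I w1 x b))) e.
rewrite opprD opprK addrC -scaleNr [RHS]addrC.
by congr (_ *: _ + _); rewrite intrD intrN -pmulrn; ring.
Qed.

Lemma I_w1_eq0 : (forall x b, I w1 x b = 0) -> forall a x b, I a x b = 0.
Proof.
move=> I0 a; pose Ann a := forall x b, I a x b = 0.
have Ann_closed : vir_closed L1 Ann.
  split.
  - by move=> x b; rewrite (lin0 (I_linear_l _ _)).
  - by move=> u v Hu Hv x b; rewrite (linD (I_linear_l _ _)) Hu Hv addr0.
  - by move=> al u Hu x b; rewrite (linZ (I_linear_l _ _)) Hu scaler0.
  (* Jacobi identity for the conformal vector, with n + 1 and m = 0. *)
  move=> n u Hu x b.
  have [X [H1 H2]] := I_jacobi u b (n + 1) 0 x (isT : virc_basis [:: 2%N]).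
  have : X = 0.
    apply: (fin_sum0 H1) => j.
    by rewrite (vir_modes_omega r3 m3) Hu (lin0 (vir_linear r3 _)) Hu scaler0 subrr scaler0.
  rewrite (fin_sum1 (j0:=0%N) H2) => [|[//|j] _]; last by rewrite binZ0S scale0r.
  by rewrite binZ0 scale1r (vir_modes_omega r1 m1) mulr0z add0r addr0 !subr0 addrK.
exact: (gen1 Ann_closed I0).
Qed.

Lemma pos_I_w1_mono : (forall x, pos_span L3 w3 (I w1 x w2)) ->
  forall J x, pos_span L3 w3 (I w1 x (mono_act L2 J w2)).
Proof.
move=> Pw2; elim=> [|j J IH] x /=; first exact: Pw2.
rewrite I_w1_Lneg; apply: pos_spanD; last exact: pos_spanZ.
by apply: (pos_span_Lneg r3).
Qed.

Lemma pos_I_w1_eq0 : (forall x, pos_span L3 w3 (I w1 x w2)) -> forall x b, I w1 x b = 0.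
Proof.
move=> Pw2 x b; case: (eqVneq (I w1 x b) 0) => // nz; exfalso.
pose Q y := exists l : seq (C * (C * M2)), y = \sum_(t <- l) t.1 *: I w1 t.2.1 t.2.2.
have Qc : vir_closed L3 Q.
  split.
  - by exists [::]; rewrite big_nil.
  - by move=> y z [l1 ->] [l2 ->]; exists (l1 ++ l2); rewrite big_cat.
  - move=> a y [l ->]; exists [seq (a * t.1, t.2) | t <- l].
    by rewrite big_map scaler_sumr; apply: eq_bigr => t _; rewrite scalerA.
  move=> n y [l ->]; elim: l => [|t l [l' IH]].
    by exists [::]; rewrite !big_nil (lin0 (vir_linear r3 _)).
  exists ((t.1, (t.2.1, L2 n t.2.2)) ::
          (t.1 * ((n + 1)%:~R * h1 - ((n + 1)%:~R + t.2.1)), (t.2.1 + n%:~R, t.2.2)) :: l').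
  rewrite big_cons (linD (vir_linear r3 _)) IH !big_cons /= addrA; congr (_ + _).
  rewrite (linZ (vir_linear r3 _)) -scalerA -scalerDr; congr (_ *: _).
  by rewrite -I_hw_comm addrC subrK.
have QP y : Q y -> pos_span L3 w3 y.
  move=> [l ->]; apply: big_ind => [|u v|t _]; first exact: pos_span0.
    exact: pos_spanD.
  apply: pos_spanZ; have [s ->] := hw_span_all r2 hw2 gen2 t.2.2.
  rewrite /sigma_act (lin_sum (I_linear_r _ _)); apply: big_ind => [|u v|u _].
  - exact: pos_span0.
  - exact: pos_spanD.
  by rewrite (linZ (I_linear_r _ _)); apply/pos_spanZ/pos_I_w1_mono.
apply: w3_neq0; rewrite -[w3]scale1r; apply: (pos_span_hw_eq0 r3 hw3).
rewrite scale1r; apply/QP/(irr3 Qc); exists (I w1 x b); split; last exact/eqP.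
by exists [:: (1, (x, b))]; rewrite big_seq1 scale1r.
Qed.

Lemma pos_I_w1_w2_off_weight x : x != h1 + h2 - h3 - 1 -> pos_span L3 w3 (I w1 x w2).
Proof.
move=> xn; apply: (pos_span_off_weight r3 hw3 gen3 (mu := h1 + h2 - 1 - x)).
  have := I_hw_comm 0 x w2; case: hw2 => -> _.
  rewrite (linZ (I_linear_r _ _)) add0r mulr1z mul1r addr0 => /eqP.
  by rewrite subr_eq => /eqP ->; rewrite -scalerDl; congr (_ *: _); ring.
apply: contra xn => /eqP e; apply/eqP; rewrite -e; ring.
Qed.

Lemma pos_I_w1_mono_witt J x : all (fun j => 0 < j)%N J ->
  pos_span L3 w3 (I w1 (x + (sumn J)%:R) (mono_act L2 J w2)
                  - (witt_mono (- h1) (x + 1 - h1 - h1) J).1 *: I w1 x w2).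
Proof.
elim: J => [|j J IH]; first by rewrite /= addr0 scale1r subrr => _; apply: pos_span0.
case/andP => j0 /IH PJ; rewrite I_w1_Lneg witt_mono_cons.
have -> : x + (sumn (j :: J))%:R - j%:R = x + (sumn J)%:R by rewrite [sumn _]/= natrD; ring.
have -> : x + (sumn (j :: J))%:R + 1 - j%:R + (j%:R - 1) * h1 =
          x + 1 - h1 - h1 + (sumn J)%:R - - h1 * j.+1%:R.
  by rewrite [sumn _]/= natrD -addn1 natrD; ring.
set k := x + 1 - h1 - h1 + _ - _.
rewrite [_ * k]mulrC -scalerA -addrA -scalerBr; apply: pos_spanD; last exact: pos_spanZ.
by apply: (pos_span_Lneg_gen r3 hw3 gen3).
Qed.

Lemma pos_I_w1_sigma_witt s n x : all (fun t => is_partition_of t.2 n) s ->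
  pos_span L3 w3 (I w1 (x + n%:R) (sigma_act L2 s w2)
                  - witt_rho s (- h1) (x + 1 - h1 - h1) *: I w1 x w2).
Proof.
elim: s => [_ | t s IH].
  rewrite sigma_act_nil (lin0 (I_linear_r _ _)) /witt_rho big_nil scale0r subr0.
  exact: pos_span0.
case/andP=> /andP[/andP[_ pos] /eqP deg] /IH Ps.
rewrite sigma_act_cons (linD (I_linear_r _ _)) (linZ (I_linear_r _ _)) /witt_rho big_cons.
rewrite -/(witt_rho s _ _) scalerDl -scalerA opprD addrACA -scalerBr.
by apply: pos_spanD => //; apply: pos_spanZ; rewrite -deg; apply: pos_I_w1_mono_witt.
Qed.

Theorem intertwining_witt_rho_eq0 s n : all (fun t => is_partition_of t.2 n) s ->
  sigma_act L2 s w2 = 0 -> (exists a x b, I a x b <> 0) ->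
  witt_rho s (- h1) (h2 - h3 - h1) = 0.
Proof.
move=> hom s0 [a [x [b Iab]]]; set x0 := h1 + h2 - h3 - 1.
have -> : h2 - h3 - h1 = x0 + 1 - h1 - h1 by rewrite /x0; ring.
case: (eqVneq (witt_rho s (- h1) (x0 + 1 - h1 - h1)) 0) => // rho0; exfalso.
apply/Iab/I_w1_eq0/pos_I_w1_eq0 => y.
case: (eqVneq y x0) => [-> | /pos_I_w1_w2_off_weight //].
have := pos_I_w1_sigma_witt x0 hom; rewrite s0 (lin0 (I_linear_r _ _)) sub0r.
move=> /(pos_spanZ (- (witt_rho s (- h1) (x0 + 1 - h1 - h1))^-1)).
by rewrite scalerN scaleNr opprK scalerA mulVf // scale1r.
Qed.

End Intertwining.

(* The hypotheses on p, q, k, l, r, s are needed only for r s > 0: the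
   statement holds for every central charge and all weights. *)
Theorem mainTheorem12 (p q k l r s : nat) (h : C) (sigma : seq (C * seq nat)) :
  (2 <= p)%N -> (2 <= q)%N -> coprime p q ->
  (0 < k < p)%N -> (0 < r < p)%N -> (0 < l < q)%N -> (0 < s < q)%N ->
  all (fun t => is_partition_of t.2 (r * s)) sigma ->
  verma_singular (cpq p q) (hkl p q r s) sigma ->
  nonzero_intertwining_exists (cpq p q) (hkl p q k l) (hkl p q r s) h ->
  witt_rho sigma (- hkl p q k l) (hkl p q r s - h - hkl p q k l) = 0.
Proof.
move=> _ _ _ _ /andP[r0 _] _ /andP[s0 _] hom sing.
move=> [M1 [M2 [M3 [L1 [L2 [L3 [w1 [w2 [w3 [Y1 [Y2 [Y3 [I]]]]]]]]]]]]].
move=> [[irr1 irr2 irr3] [[m1 m2 m3] [hI nz]]].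
have sigma_w2 : sigma_act L2 sigma w2 = 0.
  by apply: (verma_singular_irr_eq0 sing hom _ irr2); rewrite muln_gt0 r0.
case: irr1 irr2 irr3 => [r1 _ hw1 gen1 _] [r2 _ hw2 gen2 _] [r3 w3_neq0 hw3 gen3 irr3].
exact: (intertwining_witt_rho_eq0 r1 r2 r3 m1 m2 m3 hI hw1 hw2 hw3 gen1 gen2 gen3
          irr3 w3_neq0 hom sigma_w2 nz).
Qed.
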